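(* Let $B=\bigoplus_{i\in\mathbb{Z}}B_i$ be a $\mathbb{Z}$-graded integral domain containing $\mathbb{Q}$, and let $D:B\to B$ be a nonzero homogeneous locally nilpotent derivation such that $\ker D\not\subseteq B_0$. Then some element of $D(B)\cap\ker(D)$ is a cylindrical element of $B$.
   Context: A derivation $D$ is homogeneous if there is $d$ with $D(B_i)\subseteq B_{i+d}$ for all $i$; it is locally nilpotent if for each $b$ there is $n>0$ with $D^n(b)=0$. For nonzero homogeneous $f$, $B_{(f)}$ is the degree-$0$ subring of $B_f$. A ring is a polynomial ring in one variable if it is a polynomial ring in one variable over some subring (the zero ring counts). A cylindrical element of $B$ is a nonzero homogeneous $f$ of nonzero degree with $B_{(f)}$ a polynomial ring in one variable. *)

From HB Require Import structures.
From mathcomp Require Import all_boot all_order all_algebra.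
Set Implicit Arguments. Unset Strict Implicit. Unset Printing Implicit Defensive.
Import Order.TTheory GRing.Theory Num.Theory.
Local Open Scope ring_scope.

Definition contains_Q (B : comUnitRingType) : Prop :=
  forall n : nat, (n.+1)%:R \is a @GRing.unit B.

Definition Zgrading (B : comRingType) (Bi : int -> B -> Prop) : Prop :=
  [/\ (forall i, Bi i 0),
      (forall i x y, Bi i x -> Bi i y -> Bi i (x - y)),
      (forall i j x y, Bi i x -> Bi j y -> Bi (i + j) (x * y)) /\ Bi 0 1,
      (forall b : B, exists (s : seq int) (f : int -> B),
          (forall i, Bi i (f i)) /\ b = \sum_(i <- s) f i)
    &
      (forall (s : seq int) (f : int -> B), uniq s ->
          (forall i, Bi i (f i)) -> \sum_(i <- s) f i = 0 ->
          forall i, i \in s -> f i = 0)].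

Definition is_derivation (B : comRingType) (D : B -> B) : Prop :=
  (forall x y, D (x + y) = D x + D y) /\
  (forall x y, D (x * y) = x * D y + y * D x).

Definition homogeneous_map (B : comRingType) (Bi : int -> B -> Prop)
  (D : B -> B) : Prop :=
  exists d : int, forall i b, Bi i b -> Bi (i + d) (D b).

Definition locally_nilpotent (B : comRingType) (D : B -> B) : Prop :=
  forall b, exists n : nat, (0 < n)%N /\ iter n D b = 0.

(* The degree-0 part B_(f) of B_f, viewed inside the fraction field of B:
   the elements b / f^n with b homogeneous of degree n * deg f. *)
Definition loc_deg0 (B : idomainType) (Bi : int -> B -> Prop) (f : B)
  (x : {fraction B}) : Prop :=
  exists d : int, Bi d f /\
    exists (n : nat) (b : B), Bi (n%:Z * d) b /\
      x = FracField.tofrac b / (FracField.tofrac f) ^+ n.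

(* S (a subring of the field K) is a polynomial ring in one variable:
   S = A[t] for a subring A of S and an element t algebraically independent
   over A. *)
Definition poly_ring_one_var (K : fieldType) (S : K -> Prop) : Prop :=
  exists (A : K -> Prop) (t : K),
    [/\ A 1,
        (forall x y, A x -> A y -> A (x - y)),
        (forall x y, A x -> A y -> A (x * y)),
        (forall x, S x <-> exists p : {poly K},
                             (forall i, A p`_i) /\ x = p.[t])
      & (forall p : {poly K}, (forall i, A p`_i) -> p.[t] = 0 -> p = 0)].

Definition cylindrical (B : idomainType) (Bi : int -> B -> Prop) (f : B) : Prop :=
  [/\ f != 0,
      exists d : int, d != 0 /\ Bi d f
    & poly_ring_one_var (loc_deg0 Bi f)].

(* Start from a homogeneous local slice R0 of D: f0 := D R0 is nonzero and
   lies in ker D.  If deg f0 = 0, multiply R0 by a homogeneous kernel element of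
   nonzero degree.  The integers j such that j deg R0 is congruent modulo deg f0
   to the degree of a nonzero kernel element form a subgroup m Z of Z; pick beta
   in ker D realising m and, after multiplying by a power of f0, such that
   f := f0 beta has nonzero degree.  Then f = D (R0 beta), and with R := R0 beta,
   B_f = (ker D)_f[R] by the slice expansion.  Taking degree-0 parts, only the
   powers R^(ml) survive, each a unit of (ker D)_(f) times t^l where
   t := R0^m beta^(K+1) / f^K, so B_(f) = (ker D)_(f)[t].  Finally t is
   transcendental over (ker D)_(f) because R0 is transcendental over ker D:
   D^n kills R0^i for i < n and sends R0^n to n! f0^n. *)

From HB Require Import structures.
From mathcomp Require Import all_boot all_order all_algebra.
From mathcomp Require Import ring.
From Stdlib Require Import Classical.
Import Order.TTheory GRing.Theory Num.Theory.
Local Open Scope ring_scope.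
Set Implicit Arguments. Unset Strict Implicit. Unset Printing Implicit Defensive.

Section Grading.
Variables (B : comNzRingType) (Bi : int -> B -> Prop).
Hypothesis grB : Zgrading Bi.

Lemma homog0 i : Bi i 0.
Proof. by case: grB. Qed.

Lemma homogB i x y : Bi i x -> Bi i y -> Bi i (x - y).
Proof. by case: grB => _ H _ _ _; apply: H. Qed.

Lemma homogN i x : Bi i x -> Bi i (- x).
Proof. by move=> hx; rewrite -sub0r; apply: homogB => //; apply: homog0. Qed.

Lemma homogD i x y : Bi i x -> Bi i y -> Bi i (x + y).
Proof. by move=> hx hy; rewrite -[y]opprK; apply: homogB => //; apply: homogN. Qed.

Lemma homogM i j x y : Bi i x -> Bi j y -> Bi (i + j) (x * y).
Proof. by case: grB => _ _ [H _] _ _; apply: H. Qed.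

Lemma homog1 : Bi 0 1.
Proof. by case: grB => _ _ [_ H] _ _. Qed.

Lemma homog_deg i j x : i = j -> Bi i x -> Bi j x.
Proof. by move=> ->. Qed.

Lemma homogM_deg i j k x y : Bi i x -> Bi j y -> i + j = k -> Bi k (x * y).
Proof. by move=> hx hy <-; apply: homogM. Qed.

Lemma homogX i x n : Bi i x -> Bi (n%:Z * i) (x ^+ n).
Proof.
move=> hx; elim: n => [|n IH]; first by rewrite expr0 mul0r; apply: homog1.
by rewrite exprS; apply: homogM_deg hx IH _; rewrite intS; ring.
Qed.

Lemma homog_nat n : Bi 0 n%:R.
Proof.
elim: n => [|n IH]; first exact: homog0.
by rewrite -addn1 natrD; apply: homogD => //; apply: homog1.
Qed.

Lemma homog_sum (I : Type) (s : seq I) (P : pred I) (g : I -> B) i :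
  (forall j, P j -> Bi i (g j)) -> Bi i (\sum_(j <- s | P j) g j).
Proof.
move=> hg; elim/big_rec: _ => [|j x Pj hx]; first exact: homog0.
by apply: homogD => //; apply: hg.
Qed.

Lemma homog_decomposition b : exists s (g : int -> B),
  [/\ uniq s, forall i, Bi i (g i) & b = \sum_(i <- s) g i].
Proof.
case: grB => _ _ _ decB _; have [s [g [hg ->]]] := decB b.
elim: s => [|x s [s' [g' [us' hg' Eg']]]].
  by exists [::], g; split => //; rewrite !big_nil.
have [xs'|xNs'] := boolP (x \in s').
- exists s', (fun i => if i == x then g' i + g i else g' i); split => //.
    by move=> i; case: eqP => [->|_] //; apply: homogD.
  rewrite big_cons Eg' (bigD1_seq x) //= [in RHS](bigD1_seq x) //= eqxx.
  by rewrite [in RHS](eq_bigr g'); [ring | move=> i /negbTE ->].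
- exists (x :: s'), (fun i => if i == x then g i else g' i); split.
  + by rewrite /= xNs'.
  + by move=> i; case: eqP => [->|_].
  + rewrite !big_cons eqxx Eg'; congr (_ + _); apply: eq_big_seq => i is'.
    by case: eqP => // ix; rewrite -ix is' in xNs'.
Qed.

Lemma homog_component_eq0 (s : seq int) (g : int -> B) k :
  uniq s -> (forall i, Bi i (g i)) -> Bi k (\sum_(i <- s) g i) ->
  forall i, i \in s -> i != k -> g i = 0.
Proof.
move=> us hg hk i si ik; case: grB => _ _ _ _ dirB.
pose g' j := if j == k then \sum_(l <- s | l == k) g l - \sum_(l <- s) g l else g j.
have hg' j : Bi j (g' j).
  rewrite /g'; case: eqP => [->|_] //; apply: homogB => //.
  by apply: homog_sum => l /eqP <-.
have sum0 : \sum_(j <- k :: [seq l <- s | l != k]) g' j = 0.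
  rewrite big_cons big_filter /g' eqxx [in X in _ - X](bigID (pred1 k)) /=.
  by rewrite [X in _ + X](eq_bigr g); [ring | move=> j /negbTE ->].
have := dirB _ g' _ hg' sum0 i; rewrite /g' (negbTE ik); apply.
  by rewrite /= mem_filter eqxx /=; apply: filter_uniq.
by rewrite in_cons mem_filter ik si orbT.
Qed.

Lemma homog_deg_uniq i j x : Bi i x -> Bi j x -> x != 0 -> i = j.
Proof.
move=> hi hj; apply: contraNeq => ij; apply/eqP.
pose g l := if l == i then x else 0.
have hg l : Bi l (g l) by rewrite /g; case: eqP => [->|_] //; apply: homog0.
have := @homog_component_eq0 [:: i] g j isT hg _ i.
by rewrite big_seq1 /g eqxx inE eqxx; apply.
Qed.

End Grading.

Lemma homog0_invr (B : comUnitRingType) (Bi : int -> B -> Prop) u :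
  Zgrading Bi -> u \is a GRing.unit -> Bi 0 u -> Bi 0 u^-1.
Proof.
move=> grB uU u0; have [s [g [us hg Eg]]] := homog_decomposition grB u^-1.
have ug i : i \in s -> i != 0 -> g i = 0.
  move=> si i0; rewrite -[g i]mul1r -(mulVr uU) -mulrA.
  rewrite (@homog_component_eq0 _ _ grB s (fun i => u * g i) 0 us _ _ i si i0) ?mulr0 //.
    by move=> l; apply: (homogM_deg grB u0 (hg l) (add0r l)).
  by rewrite -mulr_sumr -Eg divrr //; apply: (homog1 grB).
rewrite Eg big_seq; apply: (homog_sum grB) => i si.
by have [->|i0] := eqVneq i 0; [apply: hg | rewrite ug //; apply: (homog0 grB)].
Qed.

Section Derivation.
Variables (B : comNzRingType) (D : B -> B).
Hypothesis isD : is_derivation D.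

Lemma derD x y : D (x + y) = D x + D y. Proof. by case: isD. Qed.

Lemma derM x y : D (x * y) = x * D y + y * D x. Proof. by case: isD. Qed.

Lemma der0 : D 0 = 0.
Proof. by apply: (@addrI _ (D 0)); rewrite -derD !addr0. Qed.

Lemma derN x : D (- x) = - D x.
Proof. by apply/eqP; rewrite -addr_eq0 -derD addNr der0. Qed.

Lemma derB x y : D (x - y) = D x - D y. Proof. by rewrite derD derN. Qed.

Lemma der1 : D 1 = 0.
Proof.
have D11 := derM 1 1; rewrite !mul1r in D11.
by apply: (@addrI _ (D 1)); rewrite addr0 -D11.
Qed.

Lemma derMn x n : D (x *+ n) = D x *+ n.
Proof. by elim: n => [|n IH]; rewrite ?mulr0n ?der0 // !mulrS derD IH. Qed.

Lemma der_nat n : D n%:R = 0.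
Proof. by rewrite derMn der1 mul0rn. Qed.

Lemma der_sum (I : Type) (s : seq I) (P : pred I) (F : I -> B) :
  D (\sum_(i <- s | P i) F i) = \sum_(i <- s | P i) D (F i).
Proof. exact: (big_morph D derD der0). Qed.

Lemma derM_kerl a x : D a = 0 -> D (a * x) = a * D x.
Proof. by move=> Da; rewrite derM Da mulr0 addr0. Qed.

Lemma derM_ker x y : D x = 0 -> D y = 0 -> D (x * y) = 0.
Proof. by move=> Dx Dy; rewrite derM_kerl // Dy mulr0. Qed.

Lemma derX x n : D (x ^+ n) = x ^+ n.-1 * D x *+ n.
Proof.
elim: n => [|n IH]; first by rewrite expr0 der1 mulr0n.
rewrite exprS derM IH; case: n IH => [|n] IH /=.
  by rewrite mulr0n mulr0 add0r mulr1n.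
by rewrite mulrnAr mulrA -exprS [in RHS]mulrS addrC.
Qed.

Lemma derX_ker a n : D a = 0 -> D (a ^+ n) = 0.
Proof. by move=> Da; rewrite derX Da mulr0 mul0rn. Qed.

Lemma iter_derD k x y : iter k D (x + y) = iter k D x + iter k D y.
Proof. by elim: k => [|k IH] //=; rewrite IH derD. Qed.

Lemma iter_der0 k : iter k D 0 = 0.
Proof. by elim: k => [|k IH] //=; rewrite IH der0. Qed.

Lemma iter_derB k x y : iter k D (x - y) = iter k D x - iter k D y.
Proof. by elim: k => [|k IH] //=; rewrite IH derB. Qed.

Lemma iter_der_sum k (I : Type) (s : seq I) (P : pred I) (F : I -> B) :
  iter k D (\sum_(i <- s | P i) F i) = \sum_(i <- s | P i) iter k D (F i).
Proof. exact: (big_morph (iter k D) (iter_derD k) (iter_der0 k)). Qed.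

Lemma iter_derM_kerl k a x : D a = 0 -> iter k D (a * x) = a * iter k D x.
Proof. by move=> Da; elim: k => [|k IH] //=; rewrite IH derM_kerl. Qed.

Lemma iter_der_homog (Bi : int -> B -> Prop) d k i x :
  (forall i b, Bi i b -> Bi (i + d) (D b)) -> Bi i x ->
  Bi (i + k%:Z * d) (iter k D x).
Proof.
move=> homD hx; elim: k => [|k IH]; first by rewrite mul0r addr0.
by rewrite iterS; have := homD _ _ IH; congr Bi; rewrite intS; ring.
Qed.

Lemma iter_der_mul_pow R f a k j : D R = f -> D f = 0 -> D a = 0 ->
  iter k D (a * R ^+ j) = a * f ^+ k * R ^+ (j - k) *+ j ^_ k.
Proof.
move=> DR Df Da; elim: k => [|k IH].
  by rewrite /= expr0 mulr1 subn0 ffactn0 mulr1n.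
rewrite iterS IH derMn -mulrA derM_kerl // derM_kerl; last exact: derX_ker.
rewrite derX DR ffactnSr mulnC mulrnA subnS; congr (_ *+ _).
by rewrite !mulrnAr exprS; congr (_ *+ _); ring.
Qed.

End Derivation.

Lemma derV_ker (B : comUnitRingType) (D : B -> B) u :
  is_derivation D -> u \is a GRing.unit -> D u = 0 -> D u^-1 = 0.
Proof.
move=> isD uU Du; apply: (mulrI uU); rewrite mulr0.
by have := derM isD u u^-1; rewrite mulrV // der1 // Du mulr0 addr0.
Qed.

Section Slice.
Variables (B : comNzRingType) (Bi : int -> B -> Prop) (D : B -> B) (d : int).
Hypotheses (grB : Zgrading Bi) (isD : is_derivation D)
  (homD : forall i b, Bi i b -> Bi (i + d) (D b)).
Variables (R f : B) (r e : int).
Hypotheses (DR : D R = f) (Df : D f = 0) (homR : Bi r R) (homf : Bi e f)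
  (e_def : e = r + d).

Lemma slice_step n b : D (iter n D b) = 0 ->
  iter n D (n`!%:R * f ^+ n * b - iter n D b * R ^+ n) = 0.
Proof.
move=> Da; have Dc : D (n`!%:R * f ^+ n) = 0.
  by apply: (derM_ker isD); [apply: (der_nat isD) | apply: (derX_ker isD)].
rewrite (iter_derB isD) (iter_derM_kerl isD) // (iter_der_mul_pow isD _ _ DR) //.
by rewrite subnn ffactnn expr0 mulr1 -mulr_natr; ring.
Qed.

(* B_f = (ker D)_f[R], with denominators cleared. *)
Lemma slice_expansion n : forall b δ, Bi δ b -> iter n D b = 0 ->
  exists N c (q : {poly B}), [/\ (0 < c)%N, c%:R * f ^+ N * b = q.[R] &
    forall j, D q`_j = 0 /\ Bi (δ + N%:Z * e - j%:Z * r) q`_j].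
Proof.
elim: n => [|n IH] b δ homb nilb.
  exists 0%N, 1%N, 0; rewrite /= in nilb; rewrite nilb mulr0 horner0.
  by split=> // j; rewrite coef0 (der0 isD); split=> //; apply: (homog0 grB).
set a := iter n D b; have Da : D a = 0 by rewrite /a -iterS.
have homa : Bi (δ + n%:Z * d) a by rewrite /a; apply: iter_der_homog.
have [||N [c [q [c_gt0 Eq homq]]]] := IH (n`!%:R * f ^+ n * b - a * R ^+ n) (δ + n%:Z * e).
- apply: (homogB grB).
    have homc := homogM grB (homog_nat grB n`!) (homogX grB n homf).
    by apply: (homogM_deg grB homc homb); ring.
  by apply: (homogM_deg grB homa (homogX grB n homR)); rewrite e_def; ring.
- exact: slice_step.
exists (N + n)%N, (c * n`!)%N, (q + (c%:R * f ^+ N * a) *: 'X^n); split.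
- by rewrite muln_gt0 c_gt0 fact_gt0.
- by rewrite hornerD hornerZ hornerXn -Eq natrM exprD; ring.
move=> j; have [Dq homqj] := homq j; rewrite coefD coefZ coefXn; split.
  rewrite (derD isD) Dq add0r.
  apply: (derM_ker isD); last by case: (j == n); rewrite ?(der_nat isD).
  by do 2!apply: (derM_ker isD) => //; [apply: (der_nat isD) | apply: (derX_ker isD)].
apply: (homogD grB); first by apply: homog_deg homqj; rewrite PoszD; ring.
have [->|jn] := eqVneq j n; last by rewrite mulr0; apply: (homog0 grB).
rewrite mulr1; apply: (homogM_deg grB _ homa).
  exact: homogM (homog_nat grB c) (homogX grB N homf).
by rewrite PoszD e_def; ring.
Qed.

End Slice.

Lemma contains_Q_natr_unit (B : comUnitRingType) k :
  contains_Q B -> (0 < k)%N -> (k%:R : B) \is a GRing.unit.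
Proof. by move=> QB k_gt0; rewrite -(prednK k_gt0); apply: QB. Qed.

Lemma contains_Q_natr_neq0 (B : comUnitRingType) k :
  contains_Q B -> (0 < k)%N -> (k%:R : B) != 0.
Proof.
by move=> QB /(contains_Q_natr_unit QB); apply: contraTneq => ->; rewrite unitr0.
Qed.

(* D^(deg p) p(R) is a nonzero multiple of the leading coefficient of p. *)
Lemma slice_transcendental (B : idomainType) (D : B -> B) (R : B) (p : {poly B}) :
  contains_Q B -> is_derivation D -> D R != 0 -> D (D R) = 0 ->
  (forall i, D p`_i = 0) -> p.[R] = 0 -> p = 0.
Proof.
move=> QB isD DR_neq0 DDR Dp; apply: contra_eq => p_neq0.
set n := (size p).-1; have size_p : size p = n.+1 by rewrite prednK ?size_poly_gt0.
apply: (contra_neq (@congr1 _ _ (iter n D) _ _)).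
rewrite (iter_der0 isD) horner_coef size_p (iter_der_sum isD) big_ord_recr /=.
rewrite big1 => [|i _]; last first.
  by rewrite (iter_der_mul_pow (f := D R) isD) // ffact_small ?mulr0n.
rewrite add0r (iter_der_mul_pow (f := D R) isD) // subnn ffactnn expr0 mulr1 -mulr_natr.
rewrite !mulf_neq0 ?expf_neq0 ?(contains_Q_natr_neq0 QB) ?fact_gt0 //.
by rewrite -lead_coefE -/n lead_coef_eq0.
Qed.

Lemma comp_poly_Xn_dvd (R : comNzRingType) (q : {poly R}) m : (0 < m)%N ->
  (forall j, ~~ (m %| j)%N -> q`_j = 0) ->
  q = (\poly_(l < size q) q`_(m * l)) \Po 'X^m.
Proof.
move=> m_gt0 qj0; apply/polyP => j; rewrite coef_comp_poly_Xn // coef_poly.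
case: dvdnP => [[l ->]|/dvdnP /qj0 //]; rewrite mulnK // mulnC.
case: ltnP => // le_q_l; rewrite nth_default //.
by apply: leq_trans le_q_l _; rewrite leq_pmull.
Qed.

Lemma classical_ex_minn (P : nat -> Prop) n :
  P n -> exists m, P m /\ forall k, (k < m)%N -> ~ P k.
Proof.
elim: n {-2}n (leqnn n) => [|N IH] n le_n_N Pn.
  by exists n; split=> // k; rewrite leqn0 in le_n_N; rewrite (eqP le_n_N).
have [[k [lt_k_n Pk]]|min_n] := classic (exists k, (k < n)%N /\ P k).
  by apply: (IH k) => //; rewrite -ltnS (leq_trans lt_k_n le_n_N).
by exists n; split=> // k lt_k_n Pk; apply: min_n; exists k.
Qed.

Section KerExponent.
Variables (B : idomainType) (Bi : int -> B -> Prop) (D : B -> B).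
Hypotheses (grB : Zgrading Bi) (isD : is_derivation D).
Variables (e r : int).

(* The j such that - j r is congruent modulo e to the degree of a nonzero
   element of ker D; a subgroup of Z when e != 0. *)
Definition ker_exponent (j : int) : Prop :=
  exists (k : int) (a : B), [/\ a != 0, D a = 0 & Bi (k * e - j * r) a].

Lemma ker_exponent0 : ker_exponent 0.
Proof.
exists 0, 1; rewrite oner_eq0 (der1 isD); split=> //.
by apply: homog_deg (homog1 grB); ring.
Qed.

Lemma ker_exponentD i j : ker_exponent i -> ker_exponent j -> ker_exponent (i + j).
Proof.
move=> [k1 [a1 [a1_neq0 Da1 homa1]]] [k2 [a2 [a2_neq0 Da2 homa2]]].
exists (k1 + k2), (a1 * a2); split; first by rewrite mulf_neq0.
  exact: (derM_ker isD).
by apply: (homogM_deg grB homa1 homa2); ring.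
Qed.

Hypothesis e_neq0 : e != 0.

Lemma ker_exponentN j : ker_exponent j -> ker_exponent (- j).
Proof.
move=> [k [a [a_neq0 Da homa]]].
have abse_gt0 : (0 < `|e|)%N by rewrite absz_gt0.
have abse1 : `|e|.-1%:Z = sgz e * e - 1.
  by rewrite -abszEsg -(prednK abse_gt0) intS addrC addKr.
exists (sgz e * k * e - sgz e * j * r - k), (a ^+ `|e|.-1); split.
- by rewrite expf_neq0.
- exact: (derX_ker isD).
- by apply: homog_deg (homogX grB _ homa); rewrite abse1; ring.
Qed.

Lemma ker_exponentMz z j : ker_exponent j -> ker_exponent (z * j).
Proof.
move=> Jj; have JnatM n : ker_exponent (n%:Z * j).
  elim: n => [|n IH]; first by rewrite mul0r; apply: ker_exponent0.
  by rewrite intS mulrDl mul1r; apply: ker_exponentD.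
by case: z => n; last rewrite NegzE mulNr; [|apply: ker_exponentN].
Qed.

Lemma ker_exponent_generator : exists m : nat,
  [/\ (0 < m)%N, ker_exponent m & forall j : nat, ker_exponent j -> (m %| j)%N].
Proof.
have Je : ker_exponent `|e|%N.
  exists (sgz e * r), 1; rewrite oner_eq0 (der1 isD); split=> //.
  by apply: homog_deg (homog1 grB); rewrite abszEsg; ring.
have [|m [[m_gt0 Jm] min_m]] := @classical_ex_minn
  (fun m => (0 < m)%N /\ ker_exponent m) `|e|%N; first by rewrite absz_gt0.
exists m; split=> // j Jj; apply/dvdnP; exists (j %/ m)%N.
have [mod0|mod_gt0] := posnP (j %% m)%N; first by rewrite {1}(divn_eq j m) mod0 addn0.
exfalso; apply: (min_m (j %% m)%N); first by rewrite ltn_pmod.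
split=> //; have -> : (j %% m)%N%:Z = j%:Z + (- (j %/ m)%N%:Z) * m%:Z.
  by rewrite {2}(divn_eq j m) PoszD PoszM; ring.
by apply: ker_exponentD => //; apply: ker_exponentMz.
Qed.

(* The factor f0^(K - k) makes the degree (K+1)e - m r of f0 * beta nonzero. *)
Lemma ker_exponent_witness f0 : D f0 = 0 -> f0 != 0 -> Bi e f0 ->
  exists (m K : nat) (beta : B),
  [/\ (0 < m)%N, forall j : nat, ker_exponent j -> (m %| j)%N,
      [/\ beta != 0, D beta = 0 & Bi (K%:Z * e - m%:Z * r) beta]
    & K.+1%:Z * e - m%:Z * r != 0].
Proof.
move=> Df0 f0_neq0 homf0.
have [m [m_gt0 [k [a [a_neq0 Da homa]]] min_m]] := ker_exponent_generator.
have [K [le_k_K degK]] : exists K : nat, k <= K%:Z /\ K.+1%:Z * e - m%:Z * r != 0.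
  have [deg0|] := eqVneq (`|k|%N.+1%:Z * e - m%:Z * r) 0; last first.
    by exists `|k|%N; split=> //; apply: lez_abs.
  exists `|k|%N.+1; split; first by apply: le_trans (lez_abs k) _; rewrite lez_nat.
  by rewrite (intS `|k|%N.+1) mulrDl mul1r -addrA deg0 addr0.
exists m, K, (a * f0 ^+ `|K%:Z - k|%N); split=> //; split.
- by rewrite mulf_neq0 // expf_neq0.
- by apply: (derM_ker isD) => //; apply: (derX_ker isD).
- apply: (homogM_deg grB homa (homogX grB _ homf0)).
  by rewrite gez0_abs ?subr_ge0 //; ring.
Qed.

End KerExponent.

Lemma divXn_extend (L : fieldType) (a u : L) p k :
  u != 0 -> a / u ^+ p = a * u ^+ k / u ^+ (p + k).
Proof. by move=> u_neq0; rewrite exprD; field; rewrite !expf_neq0. Qed.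

Lemma mul_divXn (L : fieldType) (a b u : L) p q :
  u != 0 -> a / u ^+ p * (b / u ^+ q) = a * b / u ^+ (p + q).
Proof. by move=> u_neq0; rewrite exprD; field; rewrite !expf_neq0. Qed.

Lemma divXn_clear (L : fieldType) (c v u : L) P k i n : (i <= n)%N -> u != 0 ->
  c / u ^+ P * (v / u ^+ k) ^+ i * u ^+ (P + k * n) = c * u ^+ (k * (n - i)) * v ^+ i.
Proof.
move=> le_i_n u_neq0.
have -> : (k * n = k * i + k * (n - i))%N by rewrite -mulnDr subnKC.
by rewrite expr_div_n !exprD -!exprM mulnC; field; rewrite !expf_neq0.
Qed.

Lemma mul_divXn_pow (L : fieldType) (q c x w v u : L) (n k l : nat) :
  c != 0 -> u != 0 -> x * u ^+ k.+1 = w * v ->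
  q * x ^+ l / (c * u ^+ n) = c^-1 * q * w ^+ l / u ^+ (n + l) * (v / u ^+ k) ^+ l.
Proof.
move=> c_neq0 u_neq0 xu; have -> : x = w * v / u ^+ k.+1 by rewrite -xu mulfK ?expf_neq0.
by rewrite !expr_div_n !exprMn -!exprM !exprD; field; rewrite !expf_neq0.
Qed.

Lemma divXn_scale (L : fieldType) (b c u : L) n N :
  c != 0 -> u != 0 -> b / u ^+ n = c * u ^+ N * b / (c * u ^+ (n + N)).
Proof. by move=> c_neq0 u_neq0; rewrite exprD; field; rewrite !expf_neq0. Qed.

Section Cylinder.
Variables (B : idomainType) (Bi : int -> B -> Prop) (D : B -> B) (d : int).
Hypotheses (grB : Zgrading Bi) (QB : contains_Q B) (isD : is_derivation D)
  (homD : forall i b, Bi i b -> Bi (i + d) (D b)) (nilD : locally_nilpotent D).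
Variables (R0 : B) (rho : int) (m K : nat) (beta : B).
Local Notation e := (rho + d).
Local Notation f0 := (D R0).
Hypotheses (homR0 : Bi rho R0) (f0_neq0 : f0 != 0) (Df0 : D f0 = 0)
  (e_neq0 : e != 0) (m_gt0 : (0 < m)%N)
  (m_min : forall j : nat, ker_exponent Bi D e rho j -> (m %| j)%N)
  (beta_neq0 : beta != 0) (Dbeta : D beta = 0)
  (homBeta : Bi (K%:Z * e - m%:Z * rho) beta)
  (e1_neq0 : K.+1%:Z * e - m%:Z * rho != 0).

Let f := f0 * beta.
Let R := R0 * beta.
Let T := R0 ^+ m * beta ^+ K.+1.
Local Notation e1 := (K.+1%:Z * e - m%:Z * rho).
Local Notation r1 := (rho + (K%:Z * e - m%:Z * rho)).
Local Notation "x %:F" := (@FracField.tofrac B x).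
Local Notation F := (f%:F).
Local Notation t := (T%:F / F ^+ K).

Let DR : D R = f.
Proof. by rewrite (derM isD) Dbeta mulr0 add0r mulrC. Qed.
Let Df : D f = 0. Proof. exact: (derM_ker isD). Qed.
Let f_neq0 : f != 0. Proof. exact: mulf_neq0. Qed.
Let F_neq0 : F != 0. Proof. by rewrite tofrac_eq0. Qed.
Let homf0 : Bi e f0. Proof. exact: homD. Qed.
Let homf : Bi e1 f.
Proof. by apply: (homogM_deg grB homf0 homBeta); rewrite intS; ring. Qed.
Let homR : Bi r1 R. Proof. exact: (homogM grB). Qed.
Let e1_def : e1 = r1 + d. Proof. by rewrite intS; ring. Qed.
Let homT : Bi (K%:Z * e1) T.
Proof.
apply: (homogM_deg grB (homogX grB m homR0) (homogX grB K.+1 homBeta)).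
by rewrite !intS; ring.
Qed.

Lemma ker_degree_dvd (L j : nat) q : q != 0 -> D q = 0 ->
  Bi (L%:Z * e1 - j%:Z * r1) q -> (m %| j)%N.
Proof.
move=> q_neq0 Dq homq; apply: m_min.
have J1 : ker_exponent Bi D e rho (L%:Z * m%:Z + j%:Z - j%:Z * m%:Z).
  exists (L%:Z * K.+1%:Z - j%:Z * K%:Z), q; split=> //.
  by apply: homog_deg homq; ring.
have Jm : ker_exponent Bi D e rho m by exists K%:Z, beta.
have := ker_exponentD grB isD J1 (ker_exponentMz grB isD e_neq0 (j%:Z - L%:Z) Jm).
by congr ker_exponent; ring.
Qed.

Definition ker_loc (x : {fraction B}) : Prop :=
  exists (p : nat) (a : B), [/\ D a = 0, Bi (p%:Z * e1) a & x = a%:F / F ^+ p].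

Lemma frac_expand a p k : a%:F / F ^+ p = (a * f ^+ k)%:F / F ^+ (p + k).
Proof. by rewrite (rmorphM _ a) rmorphXn; apply: divXn_extend. Qed.

Lemma ker_loc0 : ker_loc 0.
Proof.
by exists 0%N, 0; rewrite (der0 isD) rmorph0 !mul0r; split=> //; apply: (homog0 grB).
Qed.

Lemma ker_loc1 : ker_loc 1.
Proof.
exists 0%N, 1; rewrite (der1 isD) rmorph1 expr0 divr1 mul0r; split=> //.
exact: (homog1 grB).
Qed.

Lemma ker_locB x y : ker_loc x -> ker_loc y -> ker_loc (x - y).
Proof.
move=> [p [a [Da homa ->]]] [q [b [Db homb ->]]].
exists (p + q)%N, (a * f ^+ q - b * f ^+ p); split.
- by rewrite (derB isD) !(derM_ker isD) ?(derX_ker isD) ?subrr.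
- apply: (homogB grB).
    by apply: (homogM_deg grB homa (homogX grB q homf)); rewrite PoszD; ring.
  by apply: (homogM_deg grB homb (homogX grB p homf)); rewrite PoszD; ring.
- by rewrite rmorphB (frac_expand a p q) (frac_expand b q p) addnC mulrBl.
Qed.

Lemma ker_locM x y : ker_loc x -> ker_loc y -> ker_loc (x * y).
Proof.
move=> [p [a [Da homa ->]]] [q [b [Db homb ->]]].
exists (p + q)%N, (a * b); split; first exact: (derM_ker isD).
  by apply: (homogM_deg grB homa homb); rewrite PoszD; ring.
by rewrite (rmorphM _ a) mul_divXn.
Qed.

Lemma ker_loc_common_denom n (p : {poly {fraction B}}) : (forall i, ker_loc p`_i) ->
  exists (P : nat) (c : nat -> B), (forall i, D (c i) = 0 /\ Bi (P%:Z * e1) (c i)) /\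
    forall i, (i < n)%N -> p`_i = (c i)%:F / F ^+ P.
Proof.
move=> kp; elim: n => [|n [P [c [kc Ec]]]].
  exists 0%N, (fun _ => 0); split=> // i.
  by rewrite (der0 isD); split=> //; apply: (homog0 grB).
have [pn [an [Dan homan Ean]]] := kp n.
exists (P + pn)%N, (fun i => if i == n then an * f ^+ P else c i * f ^+ pn); split.
  move=> i; have [Dci homci] := kc i; case: eqP => _; split.
  - by apply: (derM_ker isD) => //; apply: (derX_ker isD).
  - by apply: (homogM_deg grB homan (homogX grB P homf)); rewrite PoszD; ring.
  - by apply: (derM_ker isD) => //; apply: (derX_ker isD).
  - by apply: (homogM_deg grB homci (homogX grB pn homf)); rewrite PoszD; ring.
move=> i; rewrite ltnS leq_eqVlt; case: eqVneq => [->|ni] /= lt_i_n.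
  by rewrite Ean (frac_expand an pn P) addnC.
by rewrite Ec // (frac_expand (c i) P pn).
Qed.

Lemma horner_t_clear n P (c : nat -> B) (p : {poly {fraction B}}) :
  (size p <= n)%N -> (forall i, (i < n)%N -> p`_i = (c i)%:F / F ^+ P) ->
  p.[t] * F ^+ (P + K * n) = (\sum_(i < n) c i * f ^+ (K * (n - i)) * T ^+ i)%:F.
Proof.
move=> size_p Ep; rewrite (horner_coef_wide _ size_p) mulr_suml rmorph_sum.
apply: eq_bigr => -[i /= lt_i_n] _.
by rewrite Ep // (rmorphM _ (c i * _)) (rmorphM _ (c i)) !rmorphXn divXn_clear // ltnW.
Qed.

Lemma loc_deg0_horner (p : {poly {fraction B}}) :
  (forall i, ker_loc p`_i) -> loc_deg0 Bi f p.[t].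
Proof.
move=> kp; have [P [c [kc Ec]]] := ker_loc_common_denom (size p) kp.
exists e1; split=> //; exists (P + K * size p)%N.
exists (\sum_(i < size p) c i * f ^+ (K * (size p - i)) * T ^+ i).
split; last by rewrite -(horner_t_clear (leqnn _) Ec) mulfK // expf_neq0.
apply: (homog_sum grB) => -[i /= lt_i_n] _.
apply: (homogM_deg grB (homogM grB (kc i).2 (homogX grB _ homf)) (homogX grB i homT)).
have <- : (K * (size p - i) + K * i = K * size p)%N by rewrite -mulnDr subnK // ltnW.
by rewrite !PoszD !PoszM; ring.
Qed.

Lemma ker_loc_transcendental (p : {poly {fraction B}}) :
  (forall i, ker_loc p`_i) -> p.[t] = 0 -> p = 0.
Proof.
move=> kp pt0; set n := size p.
have [P [c [kc Ec]]] := ker_loc_common_denom n kp.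
pose Q := \poly_(i < n) (c i * f ^+ (K * (n - i)) * beta ^+ (K.+1 * i)).
have DQ i : D (Q \Po 'X^m)`_i = 0.
  rewrite coef_comp_poly_Xn // coef_poly; case: ifP => _; last exact: (der0 isD).
  case: ifP => _; last exact: (der0 isD).
  apply: (derM_ker isD); last exact: (derX_ker isD).
  by apply: (derM_ker isD); [apply: (kc _).1 | apply: (derX_ker isD)].
have /eqP Q0 : Q \Po 'X^m == 0.
  apply/eqP; apply: (slice_transcendental QB isD f0_neq0 Df0 DQ).
  apply/eqP; rewrite horner_comp hornerXn horner_poly -tofrac_eq0.
  have := horner_t_clear (leqnn n) Ec; rewrite pt0 mul0r => /esym/eqP.
  congr (_ == 0); congr _%:F; apply: eq_bigr => i _.
  by rewrite /T !exprMn -!exprM; ring.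
apply/polyP => i; rewrite coef0; case: (ltnP i n) => [lt_i_n|]; last exact: nth_default.
have := congr1 (fun q : {poly B} => q`_(i * m)) Q0.
rewrite coef0 coef_comp_poly_Xn // dvdn_mull // mulnK // coef_poly lt_i_n => /eqP.
rewrite !mulf_eq0 !expf_eq0 (negbTE beta_neq0) (negbTE f_neq0) !andbF !orbF.
by rewrite Ec // => /eqP ->; rewrite rmorph0 mul0r.
Qed.

Lemma loc_deg0_homog x : loc_deg0 Bi f x ->
  exists (n : nat) (b : B), Bi (n%:Z * e1) b /\ x = b%:F / F ^+ n.
Proof.
move=> [d' [homf' [n [b [homb ->]]]]].
by rewrite (homog_deg_uniq grB homf' homf f_neq0) in homb; exists n, b.
Qed.

Lemma loc_deg0_ker_poly x : loc_deg0 Bi f x ->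
  exists p : {poly {fraction B}}, (forall i, ker_loc p`_i) /\ x = p.[t].
Proof.
move=> /loc_deg0_homog [n [b [homb ->]]]; have [k [_ nilb]] := nilD b.
have [N [c [q [c_gt0 Eq kq]]]] :=
  slice_expansion grB isD homD DR Df homR homf e1_def homb nilb.
set L := (n + N)%N; have cU := contains_Q_natr_unit QB c_gt0.
have q_dvd j : ~~ (m %| j)%N -> q`_j = 0.
  move=> ndvd; apply/eqP; apply: contraNT ndvd => qj_neq0; have [Dqj homqj] := kq j.
  apply: (ker_degree_dvd (L := L) qj_neq0 Dqj).
  by apply: homog_deg homqj; rewrite PoszD; ring.
set w := beta ^+ m * f0 ^+ K.+1.
have Dw : D w = 0 by apply: (derM_ker isD); apply: (derX_ker isD).
pose a l := c%:R^-1 * q`_(m * l) * w ^+ l.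
exists (\poly_(l < size q) ((a l)%:F / F ^+ (L + l))); split.
  move=> l; rewrite coef_poly; case: ifP => _; last exact: ker_loc0.
  exists (L + l)%N, (a l); split=> //.
    apply: (derM_ker isD); last exact: (derX_ker isD).
    apply: (derM_ker isD); last exact: (kq _).1.
    by apply: (derV_ker isD cU); apply: (der_nat isD).
  apply: (homogM_deg grB (homogM grB (homog0_invr grB cU (homog_nat grB c)) (kq _).2)).
    exact: (homogX grB _ (homogM grB (homogX grB m homBeta) (homogX grB K.+1 homf0))).
  by rewrite /L !PoszD !PoszM !intS; ring.
rewrite (comp_poly_Xn_dvd m_gt0 q_dvd) horner_comp hornerXn horner_poly in Eq.
have c_neq0 : (c%:R : B)%:F != 0 by rewrite tofrac_eq0 contains_Q_natr_neq0.
rewrite (divXn_scale _ _ N c_neq0 F_neq0) -/L -rmorphXn -!rmorphM Eq horner_poly.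
rewrite rmorph_sum mulr_suml; apply: eq_bigr => l _.
(* R^m f^(K+1) = w T, so R^(ml) = (w / f)^l t^l. *)
have RfwT : (R ^+ m)%:F * F ^+ K.+1 = w%:F * T%:F.
  by rewrite -rmorphXn -!rmorphM /R /f /w /T; congr _%:F; rewrite !exprMn; ring.
rewrite (rmorphM _ q`_(m * l)) (rmorphXn _ l) /a (rmorphM _ (c%:R^-1 * _)).
by rewrite (rmorphM _ c%:R^-1) (rmorphV _ cU) (rmorphXn _ l w); apply: mul_divXn_pow.
Qed.

Lemma cylindrical_slice_multiple : cylindrical Bi (f0 * beta).
Proof.
split=> //; first by exists e1.
exists ker_loc, t; split.
- exact: ker_loc1.
- exact: ker_locB.
- exact: ker_locM.
- move=> x; split; first exact: loc_deg0_ker_poly.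
  by move=> [p [kp ->]]; apply: loc_deg0_horner.
- exact: ker_loc_transcendental.
Qed.

End Cylinder.

Section HomogeneousSlice.
Variables (B : comNzRingType) (Bi : int -> B -> Prop) (D : B -> B) (d : int).
Hypotheses (grB : Zgrading Bi) (isD : is_derivation D)
  (homD : forall i b, Bi i b -> Bi (i + d) (D b)) (nilD : locally_nilpotent D).

Lemma homog_local_slice_iter n : forall y δ, Bi δ y -> D y != 0 -> iter n D y = 0 ->
  exists rho R0, [/\ Bi rho R0, D R0 != 0 & D (D R0) = 0].
Proof.
elim: n => [|n IH] y δ homy Dy nily.
  by rewrite /= in nily; rewrite nily (der0 isD) eqxx in Dy.
have [DDy|DDy] := eqVneq (D (D y)) 0; first by exists δ, y.
by apply: (IH (D y) (δ + d)) => //; [apply: homD | rewrite -iterSr].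
Qed.

Lemma exists_homog_local_slice : (exists b, D b != 0) ->
  exists rho R0, [/\ Bi rho R0, D R0 != 0 & D (D R0) = 0].
Proof.
move=> [b Db]; have [s [g [_ homg Eb]]] := homog_decomposition grB b.
have /hasP [i _ Dgi] : has (fun i => D (g i) != 0) s.
  apply: contraNT Db => /hasPn Dg0; rewrite Eb (der_sum isD) big1_seq //.
  by move=> i /andP [_ /Dg0 /negPn /eqP].
have [n [_ nilg]] := nilD (g i).
exact: homog_local_slice_iter (homg i) Dgi nilg.
Qed.

(* D maps B_i into B_(i+d), so the homogeneous components of a kernel element
   lie in the kernel. *)
Lemma exists_homog_ker_deg_neq0 : (exists b, D b = 0 /\ ~ Bi 0 b) ->
  exists eta h, [/\ eta != 0, Bi eta h, h != 0 & D h = 0].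
Proof.
move=> [b [Db b_not0]]; have [s [g [us homg Eb]]] := homog_decomposition grB b.
have Dg i : i \in s -> D (g i) = 0.
  move=> si; pose g' j := D (g (j - d)).
  have homg' j : Bi j (g' j) by rewrite /g'; have := homD (homg (j - d)); rewrite subrK.
  have us' : uniq [seq j + d | j <- s] by rewrite map_inj_uniq // => x y /addIr.
  have homDb : Bi (i + d + 1) (\sum_(j <- [seq j + d | j <- s]) g' j).
    rewrite big_map /g' (eq_bigr (fun j => D (g j))) => [|j _]; last by rewrite addrK.
    by rewrite -(der_sum isD) -Eb Db; apply: (homog0 grB).
  have := homog_component_eq0 grB us' homg' homDb (i := i + d).
  rewrite /g' addrK; apply; first exact: map_f.
  by rewrite -subr_eq0 opprD addrA subrr sub0r oppr_eq0 oner_eq0.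
have [/hasP [i si /andP [i_neq0 gi_neq0]]|/hasPn comp0] :=
    boolP (has (fun i => (i != 0) && (g i != 0)) s).
  by exists i, (g i); split=> //; apply: Dg.
exfalso; apply: b_not0; rewrite Eb big_seq; apply: (homog_sum grB) => i si.
have := comp0 i si; rewrite negb_and !negbK => /orP [/eqP -> | /eqP ->].
  exact: homg.
exact: (homog0 grB).
Qed.

End HomogeneousSlice.

Lemma exists_homog_local_slice_deg_neq0 (B : idomainType) (Bi : int -> B -> Prop)
    (D : B -> B) (d : int) :
  Zgrading Bi -> is_derivation D -> (forall i b, Bi i b -> Bi (i + d) (D b)) ->
  locally_nilpotent D -> (exists b, D b != 0) -> (exists b, D b = 0 /\ ~ Bi 0 b) ->
  exists rho R0, [/\ Bi rho R0, D R0 != 0, D (D R0) = 0 & rho + d != 0].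
Proof.
move=> grB isD homD nilD Dnz kerNz.
have [rho [R0 [homR0 DR0 DDR0]]] := exists_homog_local_slice grB isD homD nilD Dnz.
have [deg_neq0|deg0] := eqVneq (rho + d) 0; last by exists rho, R0.
have [eta [h [eta_neq0 homh h_neq0 Dh]]] := exists_homog_ker_deg_neq0 grB isD homD kerNz.
have DR0h : D (R0 * h) = h * D R0 by rewrite (derM isD) Dh mulr0 add0r.
exists (rho + eta), (R0 * h); split.
- exact: (homogM grB).
- by rewrite DR0h mulf_neq0.
- by rewrite DR0h (derM_ker isD).
- by rewrite addrAC deg_neq0 add0r.
Qed.

Theorem proposition4p3 (B : idomainType) (Bi : int -> B -> Prop) (D : B -> B) :
  Zgrading Bi -> contains_Q B ->
  is_derivation D -> homogeneous_map Bi D -> locally_nilpotent D ->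
  (exists b, D b != 0) ->
  (exists b, D b = 0 /\ ~ Bi 0 b) ->
  exists f : B, (exists b, f = D b) /\ D f = 0 /\ cylindrical Bi f.
Proof.
move=> grB QB isD [d homD] nilD Dnz kerNz.
have [rho [R0 [homR0 DR0 DDR0 e_neq0]]] :=
  exists_homog_local_slice_deg_neq0 grB isD homD nilD Dnz kerNz.
have [m [K [beta [m_gt0 m_min [beta_neq0 Dbeta homBeta] e1_neq0]]]] :=
  ker_exponent_witness grB isD rho e_neq0 DDR0 DR0 (homD _ _ homR0).
exists (D R0 * beta); split.
  by exists (R0 * beta); rewrite (derM isD) Dbeta mulr0 add0r mulrC.
split; first exact: (derM_ker isD).
exact: (cylindrical_slice_multiple grB QB isD homD nilD homR0 DR0 DDR0 e_neq0
  m_gt0 m_min beta_neq0 Dbeta homBeta e1_neq0).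
Qed.
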